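(* Let $\mathcal K$ be a tame topological Kuranishi atlas with a reduction $\mathcal V=\bigsqcup_I V_I$ and a nested reduction $\mathcal C\sqsubset\mathcal V$. Let $\sigma=(\sigma_I:V_I\to\mathbb E_I)_{I\in\mathcal I_{\mathcal K}}$ be a family of continuous maps with $\mathrm{pr}_I\circ\sigma_I=\mathrm{id}_{V_I}$ (for instance $\sigma_I=\mathfrak s_I|_{V_I}+\nu_I$ for a compatible perturbation $\nu_I$ when the fibres carry a continuous addition) such that $$\widehat\Phi_{IJ}\circ\sigma_I=\sigma_J\circ\phi_{IJ}\ \text{ on } V_I\cap U_{IJ}\cap\phi_{IJ}^{-1}(V_J)\quad\text{for all } I\subsetneq J,$$ $$\sigma_I^{-1}(0_I):=\{x\in V_I:\sigma_I(x)=0_I(x)\}\subset\pi_{\mathcal K}^{-1}(\pi_{\mathcal K}(\mathcal C))\cap V_I\quad\text{for all } I.$$ Let $\mathcal Z:=\bigsqcup_I\{I\}\times\sigma_I^{-1}(0_I)$ and let $|\mathcal Z|$ be its quotient by the equivalence relation generated by $(I,x)\sim(J,\phi_{IJ}(x))$ whenever $I\subset J$, $x\in U_{IJ}$, and both $(I,x)$ and $(J,\phi_{IJ}(x))$ lie in $\mathcal Z$, equipped with the quotient topology. Then $|\mathcal Z|$ is a sequentially compact Hausdorff space.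
   Context: Notation: for subsets $V'\subset V$ of a topological space, $V'\sqsubset V$ means the closure of $V'$ in $V$ is compact. $X$ is a compact metrizable space. Charts: a topological Kuranishi chart for $X$ with open footprint $F\subset X$ is a tuple $\mathbf K=(U,\mathbb E,\mathfrak s,\psi)$ where $U$ is a separable, locally compact, metrizable space; $\mathbb E$ is a separable, locally compact, metrizable space with continuous maps $\mathrm{pr}:\mathbb E\to U$ and $0:U\to\mathbb E$ with $\mathrm{pr}\circ0=\mathrm{id}_U$; $\mathfrak s:U\to\mathbb E$ is continuous with $\mathrm{pr}\circ\mathfrak s=\mathrm{id}_U$; and $\psi$ is a homeomorphism from $\mathfrak s^{-1}(0):=\{x\in U:\mathfrak s(x)=0(x)\}$ onto $F$. Coordinate changes: for charts $\mathbf K_I,\mathbf K_J$ with $F_I\cap F_J\neq\emptyset$, a coordinate change $\widehat\Phi_{IJ}:\mathbf K_I\to\mathbf K_J$ consists of an open set $U_{IJ}\subset U_I$ with $U_{IJ}\cap\mathfrak s_I^{-1}(0_I)=\psi_I^{-1}(F_I\cap F_J)$ and a topological embedding $\widehat\Phi_{IJ}:\mathrm{pr}_I^{-1}(U_{IJ})\to\mathbb E_J$ such that there is a topological embedding $\phi_{IJ}:U_{IJ}\to U_J$ with $\mathrm{pr}_J\circ\widehat\Phi_{IJ}=\phi_{IJ}\circ\mathrm{pr}_I$, $0_J\circ\phi_{IJ}=\widehat\Phi_{IJ}\circ0_I$ and $\mathfrak s_J\circ\phi_{IJ}=\widehat\Phi_{IJ}\circ\mathfrak s_I$ on $U_{IJ}$,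 and $\phi_{IJ}=\psi_J^{-1}\circ\psi_I$ on $U_{IJ}\cap\mathfrak s_I^{-1}(0_I)$. Atlases: a covering family of basic charts is a finite family $(\mathbf K_i)_{i=1,\dots,N}$ of charts whose footprints cover $X$; $\mathcal I_{\mathcal K}$ is the set of nonempty $I\subset\{1,\dots,N\}$ with $F_I:=\bigcap_{i\in I}F_i\neq\emptyset$. Transition data consist of a chart $\mathbf K_J$ with footprint $F_J$ for each $J\in\mathcal I_{\mathcal K}$ with $|J|\ge2$ (and $\mathbf K_{\{i\}}:=\mathbf K_i$), and a coordinate change $\widehat\Phi_{IJ}:\mathbf K_I\to\mathbf K_J$ for all $I\subsetneq J$ in $\mathcal I_{\mathcal K}$. We set $U_{II}:=U_I$, $\phi_{II}:=\mathrm{id}_{U_I}$. For $I\subsetneq J\subsetneq K$ let $U_{IJK}:=U_{IJ}\cap\phi_{IJ}^{-1}(U_{JK})$. The triple satisfies the weak cocycle condition if $\widehat\Phi_{JK}\circ\widehat\Phi_{IJ}=\widehat\Phi_{IK}$ on $\mathrm{pr}_I^{-1}(U_{IJK}\cap U_{IK})$; the cocycle condition if in addition $U_{IJK}\subset U_{IK}$; the strong cocycle condition if in addition $U_{IJK}=U_{IK}$. A weak topological Kuranishi atlas $\mathcal K$ is a covering family with transition data satisfying the weak cocycle condition for all such triples; a topological Kuranishi atlas is one satisfying the cocycle condition for all triples. Filtrations: a weak topological Kuranishi atlas is filtered if it is equipped with closed subsets $\mathbb E_{IJ}\subset\mathbb E_J$ for all $J\in\mathcal I_{\mathcal K}$ and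 $I\subset J$ (including $I=\emptyset$) such that (i) $\mathbb E_{JJ}=\mathbb E_J$ and $\mathbb E_{\emptyset J}=\mathrm{im}\,0_J$; (ii) $\widehat\Phi_{JK}(\mathrm{pr}_J^{-1}(U_{JK})\cap\mathbb E_{IJ})=\mathbb E_{IK}\cap\mathrm{pr}_K^{-1}(\mathrm{im}\,\phi_{JK})$ for $I\subset J\subsetneq K$; (iii) $\mathbb E_{IJ}\cap\mathbb E_{HJ}=\mathbb E_{(I\cap H)J}$ for $I,H\subset J$; (iv) $\mathrm{im}\,\phi_{IJ}$ is an open subset of $\mathfrak s_J^{-1}(\mathbb E_{IJ})$ for $I\subsetneq J$. Tameness: a filtered weak topological Kuranishi atlas is tame if $U_{IJ}\cap U_{IK}=U_{I(J\cup K)}$ for all $I,J,K\in\mathcal I_{\mathcal K}$ with $I\subset J,K$ (where $U_{IL}:=\emptyset$ if $L\notin\mathcal I_{\mathcal K}$), and $\phi_{IJ}(U_{IK})=U_{JK}\cap\mathfrak s_J^{-1}(\mathbb E_{IJ})$ for all $I\subset J\subset K$ in $\mathcal I_{\mathcal K}$ (equalities of indices allowed). Virtual neighbourhood: for a topological Kuranishi atlas, $|\mathcal K|$ is the quotient of $\bigsqcup_{I\in\mathcal I_{\mathcal K}}U_I=\{(I,x):x\in U_I\}$ by the equivalence relation generated by $(I,x)\sim(J,\phi_{IJ}(x))$ for $I\subset J$, $x\in U_{IJ}$, with the quotient topology and projection $\pi_{\mathcal K}$; $\iota_{\mathcal K}(X):=\pi_{\mathcal K}\big(\bigsqcup_I\{I\}\times\mathfrak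 s_I^{-1}(0_I)\big)\subset|\mathcal K|$. Reductions: a reduction of a tame topological Kuranishi atlas $\mathcal K$ is a tuple $\mathcal V=\bigsqcup_{I\in\mathcal I_{\mathcal K}}V_I$ of (possibly empty) open subsets $V_I\subset U_I$ such that (i) $V_I\sqsubset U_I$ for all $I$, and $V_I\neq\emptyset$ implies $V_I\cap\mathfrak s_I^{-1}(0_I)\neq\emptyset$; (ii) if $\pi_{\mathcal K}(\overline{V_I})\cap\pi_{\mathcal K}(\overline{V_J})\neq\emptyset$ (closures in $U_I$, $U_J$) then $I\subset J$ or $J\subset I$; (iii) $\iota_{\mathcal K}(X)\subset\pi_{\mathcal K}(\mathcal V)=\bigcup_I\pi_{\mathcal K}(V_I)$. A nested reduction is a pair of reductions $\mathcal C\sqsubset\mathcal V$, meaning $C_I\sqsubset V_I$ for all $I$. *)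

From mathcomp Require Import all_boot.
From Stdlib Require Import Reals List Relations FunctionalExtensionality PropExtensionality.

Set Implicit Arguments.
Unset Strict Implicit.
Unset Printing Implicit Defensive.

Record Top := mkTop {
  pt :> Type;
  isOpen : (pt -> Prop) -> Prop;
  open_full : isOpen (fun _ => True);
  open_inter : forall A B, isOpen A -> isOpen B -> isOpen (fun x => A x /\ B x);
  open_union : forall Fam : (pt -> Prop) -> Prop,
      (forall A, Fam A -> isOpen A) -> isOpen (fun x => exists A, Fam A /\ A x)
}.
Arguments isOpen {t} _.

Definition isClosed {T : Top} (A : T -> Prop) : Prop := isOpen (fun x => ~ A x).

Definition closure {T : Top} (A : T -> Prop) : T -> Prop :=
  fun x => forall O, isOpen O -> O x -> exists y, O y /\ A y.

Definition compact {T : Top} (K : T -> Prop) : Prop :=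
  forall Fam : (T -> Prop) -> Prop,
    (forall O, Fam O -> isOpen O) ->
    (forall x, K x -> exists O, Fam O /\ O x) ->
    exists l : list (T -> Prop),
      (forall O, In O l -> Fam O) /\ (forall x, K x -> exists O, In O l /\ O x).

(* A ⊏ B : A ⊂ B and the closure of A in B (= closure in T intersected
   with B) is compact. *)
Definition rel_compact {T : Top} (A B : T -> Prop) : Prop :=
  (forall x, A x -> B x) /\ compact (fun x => B x /\ closure A x).

Definition continuous {T S : Top} (f : T -> S) : Prop :=
  forall O, isOpen O -> isOpen (fun x => O (f x)).

Definition continuous_on {T S : Top} (A : T -> Prop) (f : T -> S) : Prop :=
  forall O, isOpen O -> exists W, isOpen W /\ forall x, A x -> (O (f x) <-> W x).

Definition embedding_on {T S : Top} (A : T -> Prop) (f : T -> S) : Prop :=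
  continuous_on A f /\
  (forall x y, A x -> A y -> f x = f y -> x = y) /\
  (forall W, isOpen W -> exists O, isOpen O /\ forall x, A x -> (W x <-> O (f x))).

Definition homeo_onto {T S : Top} (A : T -> Prop) (f : T -> S) (B : S -> Prop) : Prop :=
  embedding_on A f /\ (forall y, B y <-> exists x, A x /\ f x = y).

Definition metrizable (T : Top) : Prop :=
  exists d : T -> T -> R,
    (forall x y, d x y = 0%R <-> x = y) /\
    (forall x y, d x y = d y x) /\
    (forall x y z, (d x z <= d x y + d y z)%R) /\
    (forall O : T -> Prop, isOpen O <->
       (forall x, O x -> exists eps, (0 < eps)%R /\ forall y, (d x y < eps)%R -> O y)).

Definition separable (T : Top) : Prop :=
  exists D : nat -> option T,
    forall O : T -> Prop, isOpen O -> (exists x, O x) -> exists n x, D n = Some x /\ O x.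

Definition locally_compact (T : Top) : Prop :=
  forall x : T, exists O K, isOpen O /\ O x /\ (forall y, O y -> K y) /\ compact K.

Definition hausdorff (T : Top) : Prop :=
  forall x y : T, x <> y -> exists O1 O2, isOpen O1 /\ isOpen O2 /\ O1 x /\ O2 y /\
     (forall z, O1 z -> O2 z -> False).

Definition converges {T : Top} (u : nat -> T) (l : T) : Prop :=
  forall O, isOpen O -> O l -> exists n0, forall n, (n0 <= n)%N -> O (u n).

Definition seq_compact (T : Top) : Prop :=
  forall u : nat -> T, exists (g : nat -> nat) (l : T),
    (forall n, (g n < g n.+1)%N) /\ converges (fun n => u (g n)) l.

Section Constructions.

Definition sumOpen (I : Type) (T : I -> Top) (W : {i : I & T i} -> Prop) : Prop :=
  forall i, isOpen (fun x : T i => W (existT _ i x)).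

Lemma sum_full (I : Type) (T : I -> Top) : sumOpen (fun _ : {i : I & T i} => True).
Proof. intro i; exact (open_full (T i)). Qed.
Lemma sum_inter (I : Type) (T : I -> Top) (A B : {i : I & T i} -> Prop) :
  sumOpen A -> sumOpen B -> sumOpen (fun x => A x /\ B x).
Proof. intros HA HB i; exact (open_inter (HA i) (HB i)). Qed.
Lemma sum_union (I : Type) (T : I -> Top) (Fam : ({i : I & T i} -> Prop) -> Prop) :
  (forall A, Fam A -> sumOpen A) -> sumOpen (fun x => exists A, Fam A /\ A x).
Proof.
  intros H i.
  pose (G := fun B : T i -> Prop => exists A, Fam A /\ B = fun x => A (existT _ i x)).
  have HG : isOpen (fun x : T i => exists B, G B /\ B x).
  { apply open_union. intros B [A [HA ->]]. exact (H A HA i). }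
  have E : (fun x : T i => exists A, Fam A /\ A (existT _ i x)) =
           (fun x : T i => exists B, G B /\ B x).
  { apply: functional_extensionality => x.
    apply: propositional_extensionality. split.
    - intros [A [HA Hx]]. exists (fun x => A (existT _ i x)). split; [exists A; auto|exact Hx].
    - intros [B [[A [HA ->]] Hx]]. exists A. auto. }
  simpl. rewrite E. exact HG.
Qed.

Definition sumTop (I : Type) (T : I -> Top) : Top :=
  @mkTop {i : I & T i} (@sumOpen I T) (@sum_full I T) (@sum_inter I T) (@sum_union I T).

Definition subOpen (T : Top) (P : T -> Prop) (W : {x : T | P x} -> Prop) : Prop :=
  exists O, isOpen O /\ forall y, W y <-> O (proj1_sig y).

Lemma sub_full (T : Top) (P : T -> Prop) : subOpen (fun _ : {x : T | P x} => True).
Proof. exists (fun _ => True). split; [exact (open_full T)|tauto]. Qed.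
Lemma sub_inter (T : Top) (P : T -> Prop) (A B : {x : T | P x} -> Prop) :
  subOpen A -> subOpen B -> subOpen (fun x => A x /\ B x).
Proof.
  intros [OA [HA EA]] [OB [HB EB]]. exists (fun x => OA x /\ OB x).
  split; [exact (open_inter HA HB)|]. intro y. rewrite EA EB. tauto.
Qed.
Lemma sub_union (T : Top) (P : T -> Prop) (Fam : ({x : T | P x} -> Prop) -> Prop) :
  (forall A, Fam A -> subOpen A) -> subOpen (fun x => exists A, Fam A /\ A x).
Proof.
  intros H.
  pose (G := fun O : T -> Prop => isOpen O /\
               forall y : {x : T | P x}, O (proj1_sig y) -> exists A, Fam A /\ A y).
  exists (fun x => exists O, G O /\ O x). split.
  - apply open_union. intros O [HO _]. exact HO.
  - intro y. split.
    + intros [A [HA Ay]]. destruct (H A HA) as [OA [HOA EA]].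
      exists OA. split; [|apply EA; exact Ay].
      split; [exact HOA|]. intros y' Hy'. exists A. split; [exact HA|apply EA; exact Hy'].
    + intros [O [[_ HO] Oy]]. exact (HO y Oy).
Qed.

Definition subTop (T : Top) (P : T -> Prop) : Top :=
  @mkTop {x : T | P x} (@subOpen T P) (@sub_full T P) (@sub_inter T P) (@sub_union T P).

Definition quot_carrier (T : Top) (Rel : T -> T -> Prop) : Type :=
  {S : T -> Prop | exists t, S = clos_refl_sym_trans T Rel t}.

Definition quot_proj (T : Top) (Rel : T -> T -> Prop) (t : T) : quot_carrier Rel :=
  exist _ (clos_refl_sym_trans T Rel t) (ex_intro _ t erefl).

Definition quotOpen (T : Top) (Rel : T -> T -> Prop) (A : quot_carrier Rel -> Prop) : Prop :=
  isOpen (fun t : T => A (quot_proj Rel t)).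

Lemma quot_full (T : Top) (Rel : T -> T -> Prop) : quotOpen (fun _ : quot_carrier Rel => True).
Proof. exact (open_full T). Qed.
Lemma quot_inter (T : Top) (Rel : T -> T -> Prop) (A B : quot_carrier Rel -> Prop) :
  quotOpen A -> quotOpen B -> quotOpen (fun x => A x /\ B x).
Proof. intros HA HB. exact (open_inter HA HB). Qed.
Lemma quot_union (T : Top) (Rel : T -> T -> Prop) (Fam : (quot_carrier Rel -> Prop) -> Prop) :
  (forall A, Fam A -> quotOpen A) -> quotOpen (fun x => exists A, Fam A /\ A x).
Proof.
  intros H.
  pose (G := fun B : T -> Prop => exists A, Fam A /\ B = fun t => A (quot_proj Rel t)).
  have HG : isOpen (fun t : T => exists B, G B /\ B t).
  { apply open_union. intros B [A [HA ->]]. exact (H A HA). }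
  have E : (fun t : T => exists A, Fam A /\ A (quot_proj Rel t)) =
           (fun t : T => exists B, G B /\ B t).
  { apply: functional_extensionality => x.
    apply: propositional_extensionality. split.
    - intros [A [HA Hx]]. exists (fun t => A (quot_proj Rel t)). split; [exists A; auto|exact Hx].
    - intros [B [[A [HA ->]] Hx]]. exists A. auto. }
  unfold quotOpen. rewrite E. exact HG.
Qed.

Definition quotTop (T : Top) (Rel : T -> T -> Prop) : Top :=
  @mkTop (quot_carrier Rel) (@quotOpen T Rel) (@quot_full T Rel) (@quot_inter T Rel)
         (@quot_union T Rel).

End Constructions.

Definition zero_set {U E : Top} (s z : U -> E) : U -> Prop := fun x => s x = z x.

(* (U, E, pr, 0, s, psi) is a topological Kuranishi chart for X with open
   footprint Fp *)
Definition is_top_chart (X U E : Top) (pr : E -> U) (z s : U -> E) (psi : U -> X)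
    (Fp : X -> Prop) : Prop :=
  isOpen Fp /\
  separable U /\ locally_compact U /\ metrizable U /\
  separable E /\ locally_compact E /\ metrizable E /\
  continuous pr /\ continuous z /\ (forall x, pr (z x) = x) /\
  continuous s /\ (forall x, pr (s x) = x) /\
  homeo_onto (zero_set s z) psi Fp.

Unset Implicit Arguments.
Section Atlas.
Variables (X : Top) (N : nat) (F : 'I_N -> X -> Prop).

Definition footprint (I : {set 'I_N}) : X -> Prop := fun x => forall i, i \in I -> F i x.

Definition inIK (I : {set 'I_N}) : Prop := I != set0 /\ exists x, footprint I x.

Variables (U E : {set 'I_N} -> Top)
  (pr : forall I, E I -> U I) (z s : forall I, U I -> E I) (psi : forall I, U I -> X)
  (UIJ : forall I J : {set 'I_N}, U I -> Prop) (phi : forall I J, U I -> U J)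
  (Phi : forall I J, E I -> E J).

Definition is_coord_change (I J : {set 'I_N}) : Prop :=
  isOpen (UIJ I J) /\
  (forall x, (UIJ I J x /\ zero_set (s I) (z I) x) <->
             (zero_set (s I) (z I) x /\ footprint I (psi I x) /\ footprint J (psi I x))) /\
  embedding_on (fun e => UIJ I J (pr I e)) (Phi I J) /\
  embedding_on (UIJ I J) (phi I J) /\
  (forall e, UIJ I J (pr I e) -> pr J (Phi I J e) = phi I J (pr I e)) /\
  (forall x, UIJ I J x -> z J (phi I J x) = Phi I J (z I x)) /\
  (forall x, UIJ I J x -> s J (phi I J x) = Phi I J (s I x)) /\
  (forall x, UIJ I J x -> zero_set (s I) (z I) x ->
      zero_set (s J) (z J) (phi I J x) /\ psi J (phi I J x) = psi I x).

Definition is_top_atlas : Prop :=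
  (forall x, exists i, F i x) /\
  (forall i, isOpen (F i)) /\
  (forall (I : {set 'I_N}), inIK I -> is_top_chart (pr I) (z I) (s I) (psi I) (footprint I)) /\
  (forall (I : {set 'I_N}) x, UIJ I I x) /\ (forall (I : {set 'I_N}) x, phi I I x = x) /\
  (forall (I J : {set 'I_N}), inIK I -> inIK J -> I \proper J -> is_coord_change I J) /\
  (forall (I J K : {set 'I_N}), inIK I -> inIK J -> inIK K -> I \proper J -> J \proper K ->
     (forall e, UIJ I J (pr I e) -> UIJ J K (phi I J (pr I e)) -> UIJ I K (pr I e) ->
        Phi J K (Phi I J e) = Phi I K e) /\
     (forall x, UIJ I J x -> UIJ J K (phi I J x) -> UIJ I K x)).

Variable (EE : forall I J : {set 'I_N}, E J -> Prop).   (* EE I J = E_{IJ} ⊂ E_J *)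

Definition is_filtration : Prop :=
  (forall (I J : {set 'I_N}), inIK J -> I \subset J -> isClosed (EE I J)) /\
  (forall (J : {set 'I_N}), inIK J -> forall e, EE J J e) /\
  (forall (J : {set 'I_N}), inIK J -> forall e, EE set0 J e <-> exists u, z J u = e) /\
  (forall (I J K : {set 'I_N}), inIK J -> inIK K -> I \subset J -> J \proper K ->
     forall y, (exists e, UIJ J K (pr J e) /\ EE I J e /\ Phi J K e = y) <->
               (EE I K y /\ exists u, UIJ J K u /\ phi J K u = pr K y)) /\
  (forall (I H J : {set 'I_N}), inIK J -> I \subset J -> H \subset J ->
     forall e, (EE I J e /\ EE H J e) <-> EE (I :&: H) J e) /\
  (forall (I J : {set 'I_N}), inIK I -> inIK J -> I \proper J ->
     (forall u, UIJ I J u -> EE I J (s J (phi I J u))) /\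
     exists O, isOpen O /\ forall v, EE I J (s J v) ->
        (O v <-> exists u, UIJ I J u /\ phi I J u = v)).

Definition is_tame : Prop :=
  (forall (I J K : {set 'I_N}), inIK I -> inIK J -> inIK K -> I \subset J -> I \subset K ->
     forall x, (UIJ I J x /\ UIJ I K x) <-> (inIK (J :|: K) /\ UIJ I (J :|: K) x)) /\
  (forall (I J K : {set 'I_N}), inIK I -> inIK J -> inIK K -> I \subset J -> J \subset K ->
     forall y, (exists x, UIJ I K x /\ phi I J x = y) <-> (UIJ J K y /\ EE I J (s J y))).

Definition is_tame_top_atlas : Prop := is_top_atlas /\ is_filtration /\ is_tame.

Definition stepK (p q : {I : {set 'I_N} & U I}) : Prop :=
  match p, q with
  | existT I0 x, existT J0 y =>
      inIK I0 /\ inIK J0 /\ I0 \subset J0 /\ UIJ I0 J0 x /\ phi I0 J0 x = y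
  end.

(* pi_K(p) = pi_K(q) *)
Definition equivK : {I : {set 'I_N} & U I} -> {I : {set 'I_N} & U I} -> Prop :=
  clos_refl_sym_trans _ stepK.

Definition is_reduction (V : forall I, U I -> Prop) : Prop :=
  (forall (I : {set 'I_N}), inIK I ->
     isOpen (V I) /\ rel_compact (V I) (fun _ => True) /\
     ((exists x, V I x) -> exists x, V I x /\ zero_set (s I) (z I) x)) /\
  (forall (I J : {set 'I_N}), inIK I -> inIK J -> forall x y,
     closure (V I) x -> closure (V J) y -> equivK (existT _ I x) (existT _ J y) ->
     I \subset J \/ J \subset I) /\
  (forall (I : {set 'I_N}) x, inIK I -> zero_set (s I) (z I) x ->
     exists J y, inIK J /\ V J y /\ equivK (existT _ I x) (existT _ J y)).

Definition is_nested_reduction (C V : forall I, U I -> Prop) : Prop :=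
  is_reduction C /\ is_reduction V /\ (forall (I : {set 'I_N}), inIK I -> rel_compact (C I) (V I)).

Variables (V C : forall I, U I -> Prop) (sigma : forall I, U I -> E I).

Definition is_admissible_section : Prop :=
  (forall (I : {set 'I_N}), inIK I -> continuous_on (V I) (sigma I) /\
                       forall x, V I x -> pr I (sigma I x) = x) /\
  (forall (I J : {set 'I_N}), inIK I -> inIK J -> I \proper J ->
     forall x, V I x -> UIJ I J x -> V J (phi I J x) ->
       Phi I J (sigma I x) = sigma J (phi I J x)) /\
  (forall (I : {set 'I_N}), inIK I -> forall x, V I x -> sigma I x = z I x ->
     exists J c, inIK J /\ C J c /\ equivK (existT _ I x) (existT _ J c)).

Definition inZ (p : {I : {set 'I_N} & U I}) : Prop :=
  match p with existT I0 x => inIK I0 /\ V I0 x /\ sigma I0 x = z I0 x end.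

Definition ZTop : Top := @subTop (sumTop U) inZ.

Definition ZquotTop : Top :=
  @quotTop ZTop (fun a b : ZTop => stepK (proj1_sig a) (proj1_sig b)).

End Atlas.

(* By the tameness conditions, points of the disjoint union of the charts are
   equivalent iff coordinate changes send them to a common point; on closures of the reduction
   [V], whose index sets are nested, this common point can be taken to be one of them, so
   equivalent points of [Z] are related by a single coordinate change.
   Hausdorff: around a point [a] of [Z], take the points mapped by some [phi_LM] into [V_M]
   within [eps_M] of the representative of [a] in [U_M].  Choosing the radii by downward
   induction on [#|M|] makes these sets saturated, hence open in [|Z|].  If such neighbourhoods
   of [a] and [b] met for all radii, a pigeonhole argument would give converging pairs of
   equivalent points in two fixed charts, and as the images of the coordinate changes are
   closed (tameness) their limits, the representatives of [a] and [b], would be equivalent.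
   Sequential compactness: every point of [|Z|] is represented in some [C_J]; fixing [J] by
   pigeonhole, a subsequence converges in the compact closure of [C_J] in [V_J], and its limit
   is again a zero of [sigma_J]. *)

From Stdlib Require Import Relations FunctionalExtensionality PropExtensionality.
From Stdlib Require Import Classical ClassicalEpsilon ProofIrrelevance Reals Lra.
From mathcomp Require Import all_boot.

Set Implicit Arguments.
Unset Strict Implicit.
Unset Printing Implicit Defensive.

Local Open Scope R_scope.

(** * Topology and sequences *)

Lemma choice (A B : Type) (P : A -> B -> Prop) :
  (forall a, exists b, P a b) -> exists f, forall a, P a (f a).
Proof.
  move=> H; exists (fun a => proj1_sig (constructive_indefinite_description _ (H a))).
  by move=> a; case: constructive_indefinite_description.
Qed.

Lemma clos_rst_map (A B : Type) (f : A -> B) (RA : A -> A -> Prop) (RB : B -> B -> Prop) :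
  (forall a b, RA a b -> RB (f a) (f b)) ->
  forall a b, clos_refl_sym_trans A RA a b -> clos_refl_sym_trans B RB (f a) (f b).
Proof.
  move=> Hf a b; elim=> [p q /Hf|p|p q _|p q r _ IH1 _ IH2].
  - exact: rst_step.
  - exact: rst_refl.
  - exact: rst_sym.
  - exact: rst_trans IH1 IH2.
Qed.

Lemma open_ext (T : Top) (A B : T -> Prop) : isOpen A -> (forall x, A x <-> B x) -> isOpen B.
Proof.
  move=> HA HAB; suff -> : B = A by [].
  by apply: functional_extensionality => x; apply: propositional_extensionality; rewrite HAB.
Qed.

Lemma open_exists (T : Top) (I : Type) (P : I -> T -> Prop) :
  (forall i, isOpen (P i)) -> isOpen (fun x => exists i, P i x).
Proof.
  move=> HP; apply: (open_ext (open_union (Fam := fun O => exists i, O = P i) _)).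
  - by move=> O [i ->].
  - move=> x; split=> [[O [[i ->] Px]]|[i Px]]; first by exists i.
    by exists (P i); split => //; exists i.
Qed.

Lemma open_guard (T : Top) (Q : Prop) (P : T -> Prop) :
  (Q -> isOpen P) -> isOpen (fun x => Q /\ P x).
Proof.
  move=> HP; apply: open_ext (open_exists (P := fun _ : Q => P) HP) _.
  by move=> x; split=> -[q Px]; [split|exists q].
Qed.

Lemma open_preimage_on (T S : Top) (A : T -> Prop) (f : T -> S) (O : S -> Prop) :
  isOpen A -> continuous_on A f -> isOpen O -> isOpen (fun x => A x /\ O (f x)).
Proof.
  move=> HA Hf HO; case: (Hf O HO) => W [HW HWf].
  apply: open_ext (open_inter HA HW) _ => x.
  by split=> -[Ax H]; split => //; apply/(HWf x Ax).
Qed.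

Lemma subset_closure (T : Top) (A : T -> Prop) x : A x -> closure A x.
Proof. by move=> Ax O _ Ox; exists x. Qed.

Definition eventually (P : nat -> Prop) : Prop := exists n0, forall n, (n0 <= n)%nat -> P n.

Definition infinitely_often (P : nat -> Prop) : Prop := forall m, exists n, (m < n)%nat /\ P n.

Definition increasing (g : nat -> nat) : Prop := forall n, (g n < g n.+1)%nat.

Lemma increasing_lt g : increasing g -> forall m n, (m < n)%nat -> (g m < g n)%nat.
Proof.
  move=> Hg m; elim=> // n IH; rewrite ltnS leq_eqVlt => /orP [/eqP ->|/IH Hmn] //.
  exact: ltn_trans Hmn (Hg n).
Qed.

Lemma increasing_ge g : increasing g -> forall n, (n <= g n)%nat.
Proof. by move=> Hg; elim=> // n IH; apply: leq_ltn_trans IH (Hg n). Qed.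

Lemma increasing_comp g h : increasing g -> increasing h -> increasing (fun n => g (h n)).
Proof. by move=> Hg Hh n; apply: increasing_lt. Qed.

Lemma increasing_select (P : nat -> nat -> Prop) :
  (forall k, infinitely_often (P k)) -> exists g, increasing g /\ forall k, P k (g k).
Proof.
  move=> HP; have [next Hnext] := choice (fun km : nat * nat => HP km.1 km.2).
  pose fix g k := if k is k'.+1 then next (k, g k') else next (0, 0)%nat.
  exists g; split=> [n|[|k]]; first exact: (Hnext (n.+1, g n)).1.
  - exact: (Hnext (0, 0)%nat).2.
  - exact: (Hnext (k.+1, g k)).2.
Qed.

Lemma In_mem (T : eqType) (s : seq T) x : x \in s -> List.In x s.
Proof. by elim: s => //= y s IH; rewrite in_cons => /orP [/eqP ->|/IH]; [left|right]. Qed.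

Lemma eventually_all_In (A : Type) (l : list A) (Q : A -> nat -> Prop) :
  (forall a, List.In a l -> eventually (Q a)) ->
  eventually (fun n => forall a, List.In a l -> Q a n).
Proof.
  elim: l => [|a l IH] H; first by exists 0%nat.
  case: (H a (or_introl erefl)) => n1 Hn1.
  case: IH => [b Hb|n2 Hn2]; first by apply: H; right.
  exists (maxn n1 n2) => n; rewrite geq_max => /andP [h1 h2] b [<-|Hb].
  - exact: Hn1.
  - exact: Hn2.
Qed.

Lemma positive_all_In (A : Type) (l : list A) (P : A -> R -> Prop) :
  (forall a d d', P a d -> 0 < d' <= d -> P a d') ->
  (forall a, List.In a l -> exists d, 0 < d /\ P a d) ->
  exists d, 0 < d /\ forall a, List.In a l -> P a d.
Proof.
  move=> Hmon; elim: l => [|a l IH] H; first by exists 1; split => //; lra.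
  case: (H a (or_introl erefl)) => d1 [Hd1 Pa].
  case: IH => [b Hb|d2 [Hd2 Pl]]; first by apply: H; right.
  exists (Rmin d1 d2); split=> [|b [<-|Hb]]; first exact: Rmin_pos.
  - by apply: Hmon Pa _; split; [apply: Rmin_pos|apply: Rmin_l].
  - by apply: Hmon (Pl b Hb) _; split; [apply: Rmin_pos|apply: Rmin_r].
Qed.

Lemma finite_pigeonhole (T : finType) (P : nat -> T -> Prop) :
  (forall n, exists k, P n k) -> exists k g, increasing g /\ forall n, P (g n) k.
Proof.
  move=> H.
  suff [k Hk] : exists k, infinitely_often (fun n => P n k).
  { by case: (increasing_select (P := fun _ n => P n k)) => // g Hg; exists k, g. }
  apply: NNPP => Hno.
  have Hfin : forall k, List.In k (enum T) -> eventually (fun n => ~ P n k).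
  { move=> k _; apply: NNPP => Hk; apply: Hno; exists k => m.
    apply: NNPP => Hm; apply: Hk; exists m.+1 => n Hn Pnk; apply: Hm; by exists n. }
  case: (eventually_all_In Hfin) => n0 Hn0; case: (H n0) => k Pk.
  exact: (Hn0 n0 (leqnn _) k (In_mem (mem_enum T k)) Pk).
Qed.

Definition inv_succ (n : nat) : R := / (INR n + 1).

Lemma inv_succ_gt0 n : 0 < inv_succ n.
Proof. exact: RinvN_pos. Qed.

Lemma inv_succ_le (m n : nat) : (m <= n)%nat -> inv_succ n <= inv_succ m.
Proof.
  move=> /leP /le_INR Hmn; apply: Rinv_le_contravar; last lra.
  by have := pos_INR m; lra.
Qed.

Definition is_metric (T : Top) (d : T -> T -> R) : Prop :=
  (forall x y, d x y = 0 <-> x = y) /\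
  (forall x y, d x y = d y x) /\
  (forall x y z, d x z <= d x y + d y z) /\
  (forall O : T -> Prop, isOpen O <->
     (forall x, O x -> exists eps, 0 < eps /\ forall y, d x y < eps -> O y)).

Section Metric.
Variables (T : Top) (d : T -> T -> R).
Hypothesis Hd : is_metric d.

Lemma metric_xx x : d x x = 0.
Proof. by case: Hd => [H _]; apply: (iffRL (H _ _)). Qed.

Lemma metric_sym x y : d x y = d y x.
Proof. by case: Hd => [_ []]. Qed.

Lemma metric_triangle x y z : d x z <= d x y + d y z.
Proof. by case: Hd => [_ [_ []]]. Qed.

Lemma metric_eq0 x y : d x y = 0 -> x = y.
Proof. by case: Hd => [H _]; apply: (iffLR (H _ _)). Qed.

Lemma ball_open c r : isOpen (fun y => d c y < r).
Proof.
  case: Hd => [_ [_ [_ H]]]; apply/H => x Hx.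
  exists (r - d c x); split=> [|y Hy]; first lra.
  by have := metric_triangle c x y; lra.
Qed.

Lemma open_ball O x : isOpen O -> O x -> exists eps, 0 < eps /\ forall y, d x y < eps -> O y.
Proof. by case: Hd => [_ [_ [_ H]]] /H; apply. Qed.

Lemma metric_hausdorff : hausdorff T.
Proof.
  move=> x y Hxy; have Hp : 0 < d x y.
  { apply: Rnot_le_lt => Hle; apply/Hxy/metric_eq0.
    by have := metric_triangle x y x; rewrite metric_xx (metric_sym y x); lra. }
  exists (fun w => d x w < d x y / 2), (fun w => d y w < d x y / 2).
  do 2 (split; first exact: ball_open).
  rewrite !metric_xx; do 2 (split; first lra).
  by move=> w H1 H2; have := metric_triangle x w y; rewrite (metric_sym w y); lra.
Qed.

Lemma metric_converges u l : (forall n, d l (u n) < inv_succ n) -> converges u l.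
Proof.
  move=> Hu O HO Ol; case: (open_ball HO Ol) => eps [He Hb].
  case: (archimed_cor1 _ He) => n0 [Hn0 Hpos].
  have Hn0' : inv_succ n0 < eps.
  { apply: Rle_lt_trans Hn0; apply: Rinv_le_contravar; [exact: lt_0_INR|lra]. }
  exists n0 => n Hn; apply/Hb/(Rlt_le_trans _ _ _ (Hu n)).
  exact: Rle_trans (inv_succ_le Hn) (Rlt_le _ _ Hn0').
Qed.

Lemma compact_metric_subseq (K : T -> Prop) (u : nat -> T) :
  compact K -> (forall n, K (u n)) ->
  exists g l, increasing g /\ K l /\ converges (fun n => u (g n)) l.
Proof.
  move=> HK Hu.
  suff [l [Kl Hl]] : exists l, K l /\ forall k, infinitely_often (fun n => d l (u n) < inv_succ k).
  { case: (increasing_select Hl) => g [Hg Hgk]; exists g, l; do 2 (split => //).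
    exact: metric_converges. }
  apply: NNPP => Hno.
  pose Fam O := exists l k, K l /\ eventually (fun n => ~ d l (u n) < inv_succ k) /\
                  O = (fun y => d l y < inv_succ k).
  case: (HK Fam).
  - by move=> O [l [k [_ [_ ->]]]]; apply: ball_open.
  - move=> x Kx; apply: NNPP => Hx; apply: Hno; exists x; split => // k m.
    apply: NNPP => Hkm; apply: Hx; exists (fun y => d x y < inv_succ k); split.
    + exists x, k; do 2 split => //; exists m.+1 => n Hn Hd'; apply: Hkm; by exists n.
    + by rewrite metric_xx; apply: inv_succ_gt0.
  - move=> L [HLF HLcov].
    have Hev : forall O, List.In O L -> eventually (fun n => ~ O (u n)).
    { by move=> O /HLF [l [k [_ [Hev ->]]]]. }
    case: (eventually_all_In Hev) => n0 Hn0; case: (HLcov (u n0) (Hu n0)) => O [HO Ou].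
    exact: (Hn0 n0 (leqnn _) O HO Ou).
Qed.

End Metric.

Lemma converges_unique (T : Top) u (l l' : T) :
  hausdorff T -> converges u l -> converges u l' -> l = l'.
Proof.
  move=> HT H1 H2; apply: NNPP => /HT [O1 [O2 [HO1 [HO2 [Hl [Hl' Hdis]]]]]].
  case: (H1 _ HO1 Hl) => n1 Hn1; case: (H2 _ HO2 Hl') => n2 Hn2.
  by apply: (Hdis (u (maxn n1 n2))); [apply: Hn1|apply: Hn2]; rewrite ?leq_maxl ?leq_maxr.
Qed.

Lemma converges_subseq (T : Top) (u : nat -> T) l g :
  increasing g -> converges u l -> converges (fun n => u (g n)) l.
Proof.
  move=> Hg Hc O HO Ol; case: (Hc _ HO Ol) => n0 Hn0.
  by exists n0 => n Hn; apply/Hn0/(leq_trans Hn (increasing_ge Hg n)).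
Qed.

Lemma closed_limit (T S : Top) (f : T -> S) (A : S -> Prop) u l :
  continuous f -> isClosed A -> converges u l -> (forall n, A (f (u n))) -> A (f l).
Proof.
  move=> Hf HA Hc Hu; apply: NNPP => Hn.
  by case: (Hc _ (Hf _ HA) Hn) => n0 /(_ n0 (leqnn _)); apply.
Qed.

Lemma coincide_limit (T S : Top) (A : T -> Prop) (f g : T -> S) u p :
  hausdorff S -> continuous_on A f -> continuous g -> converges u p -> A p ->
  (forall n, A (u n) /\ f (u n) = g (u n)) -> f p = g p.
Proof.
  move=> HS Hf Hg Hc Ap Hu; apply: NNPP => /HS [O1 [O2 [HO1 [HO2 [H1 [H2 Hdis]]]]]].
  case: (Hf _ HO1) => W [HW HWf].
  case: (Hc _ (open_inter HW (Hg _ HO2)) (conj (proj1 (HWf p Ap) H1) H2)) => n0 Hn0.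
  case: (Hn0 n0 (leqnn _)) (Hu n0) => Wn Gn [An Efg].
  by apply: (Hdis (g (u n0))) => //; rewrite -Efg; apply/(HWf _ An).
Qed.

Lemma converges_sum_sub (I : Type) (T : I -> Top) (P : sumTop T -> Prop) (i : I)
    (u : nat -> T i) (p : T i) (Hu : forall n, P (existT _ i (u n))) (Hp : P (existT _ i p)) :
  converges u p ->
  converges (T := subTop P) (fun n => exist _ (existT _ i (u n)) (Hu n)) (exist _ _ Hp).
Proof.
  move=> Hc W [O [HO HWO]] /HWO Op.
  by case: (Hc _ (HO i) Op) => n0 Hn0; exists n0 => n /Hn0 ?; apply/HWO.
Qed.

Lemma quot_proj_surj (T : Top) (Rel : T -> T -> Prop) (c : quot_carrier Rel) :
  exists t, quot_proj Rel t = c.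
Proof.
  case: c => S HS; case: (HS) => t Et; exists t.
  by rewrite /quot_proj; apply: subset_eq_compat; rewrite Et.
Qed.

Lemma quot_proj_eq (T : Top) (Rel : T -> T -> Prop) a b :
  quot_proj Rel a = quot_proj Rel b <-> clos_refl_sym_trans T Rel a b.
Proof.
  split=> [E|Hab].
  - have : proj1_sig (quot_proj Rel b) b by apply: rst_refl.
    by rewrite -E.
  - apply: subset_eq_compat; apply: functional_extensionality => t.
    apply: propositional_extensionality; split=> Ht.
    + by apply: rst_trans Ht; apply: rst_sym.
    + exact: rst_trans Hab Ht.
Qed.

Lemma quot_proj_converges (T : Top) (Rel : T -> T -> Prop) (u : nat -> T) l :
  converges u l -> converges (T := quotTop Rel) (fun n => quot_proj Rel (u n)) (quot_proj Rel l).
Proof. move=> Hc O HO Ol; exact: (Hc _ HO Ol). Qed.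

Lemma quot_image_open (T : Top) (Rel : T -> T -> Prop) (O : T -> Prop) :
  isOpen O -> (forall a b, quot_proj Rel a = quot_proj Rel b -> O a -> O b) ->
  @isOpen (quotTop Rel) (fun c => exists t, O t /\ quot_proj Rel t = c).
Proof.
  move=> HO Hsat; apply: open_ext HO _ => t; split=> [Ot|[t' [Ot' Et]]]; first by exists t.
  exact: Hsat Et Ot'.
Qed.

(** * Coordinate changes and the equivalence relation of a tame atlas *)

Unset Implicit Arguments.
Section Atlas.
Variables (X : Top) (N : nat) (F : 'I_N -> X -> Prop) (U E : {set 'I_N} -> Top)
  (pr : forall I, E I -> U I) (z s : forall I, U I -> E I) (psi : forall I, U I -> X)
  (UIJ : forall I J : {set 'I_N}, U I -> Prop) (phi : forall I J, U I -> U J)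
  (Phi : forall I J, E I -> E J) (EE : forall I J : {set 'I_N}, E J -> Prop)
  (V C : forall I, U I -> Prop) (sigma : forall I, U I -> E I).
Set Implicit Arguments.

Local Notation IK := (inIK X N F).
Local Notation point := {I : {set 'I_N} & U I}.
Local Notation stepK := (stepK X N F U UIJ phi).
Local Notation eqK := (equivK X N F U UIJ phi).

Hypothesis Hchart : forall I, IK I -> is_top_chart (pr I) (z I) (s I) (psi I) (footprint X N F I).
Hypothesis HUII : forall I x, UIJ I I x.
Hypothesis HphiII : forall I x, phi I I x = x.
Hypothesis Hcc : forall I J, IK I -> IK J -> I \proper J ->
  is_coord_change X N F U E pr z s psi UIJ phi Phi I J.
Hypothesis Hcocycle : forall I J K, IK I -> IK J -> IK K -> I \proper J -> J \proper K ->
  (forall e, UIJ I J (pr I e) -> UIJ J K (phi I J (pr I e)) -> UIJ I K (pr I e) ->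
     Phi J K (Phi I J e) = Phi I K e) /\
  (forall x, UIJ I J x -> UIJ J K (phi I J x) -> UIJ I K x).
Hypothesis Htame_union : forall I J K, IK I -> IK J -> IK K -> I \subset J -> I \subset K ->
  forall x, (UIJ I J x /\ UIJ I K x) <-> (IK (J :|: K) /\ UIJ I (J :|: K) x).
Hypothesis Htame_image : forall I J K, IK I -> IK J -> IK K -> I \subset J -> J \subset K ->
  forall y, (exists x, UIJ I K x /\ phi I J x = y) <-> (UIJ J K y /\ EE I J (s J y)).

Lemma U_metrizable I : IK I -> metrizable (U I).
Proof. by move=> /Hchart [_ [_ [_ []]]]. Qed.

Lemma E_hausdorff I : IK I -> hausdorff (E I).
Proof.
  by move=> /Hchart [_ [_ [_ [_ [_ [_ [[d Hd] _]]]]]]]; apply: (metric_hausdorff (d := d)).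
Qed.

Lemma U_hausdorff I : IK I -> hausdorff (U I).
Proof. by move=> /U_metrizable [d Hd]; apply: (metric_hausdorff (d := d)). Qed.

Lemma z_continuous I : IK I -> continuous (z I).
Proof. by move=> /Hchart [_ [_ [_ [_ [_ [_ [_ [_ []]]]]]]]]. Qed.

Lemma pr_z I x : IK I -> pr I (z I x) = x.
Proof. by move=> /Hchart [_ [_ [_ [_ [_ [_ [_ [_ [_ []]]]]]]]]]. Qed.

Lemma s_continuous I : IK I -> continuous (s I).
Proof. by move=> /Hchart [_ [_ [_ [_ [_ [_ [_ [_ [_ [_ []]]]]]]]]]]. Qed.

Section CoordinateChange.
Variables (I J : {set 'I_N}) (HI : IK I) (HJ : IK J) (HIJ : I \proper J).

Lemma Phi_inj e e' : UIJ I J (pr I e) -> UIJ I J (pr I e') -> Phi I J e = Phi I J e' -> e = e'.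
Proof. by case: (Hcc HI HJ HIJ) => [_ [_ [[_ [H _]] _]]]; apply: H. Qed.

Lemma phi_open_on W : isOpen W ->
  exists O, isOpen O /\ forall x, UIJ I J x -> (W x <-> O (phi I J x)).
Proof. by case: (Hcc HI HJ HIJ) => [_ [_ [_ [[_ [_ H]] _]]]]; apply: H. Qed.

Lemma z_phi x : UIJ I J x -> z J (phi I J x) = Phi I J (z I x).
Proof. by case: (Hcc HI HJ HIJ) => [_ [_ [_ [_ [_ [H _]]]]]]; apply: H. Qed.

End CoordinateChange.

Section Inclusion.
Variables (I J : {set 'I_N}) (HI : IK I) (HJ : IK J) (HIJ : I \subset J).

Lemma UIJ_open : isOpen (UIJ I J).
Proof.
  case: (eqVneq I J) => [<-|ne]; first by apply: open_ext (open_full _) _.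
  by case: (Hcc HI HJ); rewrite // properEneq ne.
Qed.

Lemma phi_continuous_on : continuous_on (UIJ I J) (phi I J).
Proof.
  case: (eqVneq I J) => [eIJ|ne]; last first.
  - by case: (Hcc HI HJ); rewrite ?properEneq ?ne // => _ [_ [_ [[H _] _]]].
  - subst J => O HO; exists O; split=> // x _; by rewrite HphiII.
Qed.

Lemma phi_inj x y : UIJ I J x -> UIJ I J y -> phi I J x = phi I J y -> x = y.
Proof.
  case: (eqVneq I J) => [<-|ne]; first by rewrite !HphiII.
  by case: (Hcc HI HJ); rewrite ?properEneq ?ne // => _ [_ [_ [[_ [H _]] _]]]; apply: H.
Qed.

End Inclusion.

Lemma phi_comp I J K x : IK I -> IK J -> IK K -> I \subset J -> J \subset K ->
  UIJ I J x -> UIJ J K (phi I J x) -> UIJ I K x /\ phi I K x = phi J K (phi I J x).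
Proof.
  move=> HI HJ HK sIJ sJK Hx Hy.
  case: (eqVneq I J) => [eIJ|nIJ]; first by subst J; rewrite HphiII in Hy *.
  case: (eqVneq J K) => [eJK|nJK]; first by subst K; rewrite HphiII.
  have pIJ : I \proper J by rewrite properEneq nIJ.
  have pJK : J \proper K by rewrite properEneq nJK.
  have pIK := proper_trans pIJ pJK.
  case: (Hcocycle HI HJ HK pIJ pJK) => HPhi HU; have HxK := HU x Hx Hy.
  split=> //; have := HPhi (z I x); rewrite !pr_z // => /(_ Hx Hy HxK).
  rewrite -(z_phi HI HJ pIJ Hx) -(z_phi HJ HK pJK Hy) -(z_phi HI HK pIK HxK).
  by move/(f_equal (pr K)); rewrite !pr_z.
Qed.

Lemma UIJ_shrink I J K x : IK I -> IK J -> IK K -> I \subset J -> J \subset K ->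
  UIJ I K x -> UIJ I J x.
Proof.
  move=> HI HJ HK sIJ sJK Hx.
  have := Htame_union HI HJ HK sIJ (subset_trans sIJ sJK) x.
  by rewrite (setUidPr sJK) => -[_ /(_ (conj HK Hx)) []].
Qed.

Lemma UIJ_phi I J K x : IK I -> IK J -> IK K -> I \subset J -> J \subset K ->
  UIJ I K x -> UIJ J K (phi I J x).
Proof.
  move=> HI HJ HK sIJ sJK Hx.
  by case: (Htame_image HI HJ HK sIJ sJK (phi I J x)) => /(_ (ex_intro _ x (conj Hx erefl))) [].
Qed.

Lemma stepK_refl I x : IK I -> stepK (existT _ I x) (existT _ I x).
Proof. by move=> HI /=; rewrite HphiII. Qed.

Lemma stepK_trans a b c : stepK a b -> stepK b c -> stepK a c.
Proof.
  case: a => I x; case: b => J y; case: c => K w /= [HI [HJ [sIJ [Hx <-]]]] [_ [HK [sJK [Hy <-]]]].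
  case: (phi_comp HI HJ HK sIJ sJK Hx Hy) => HxK ->.
  by do 3 split => //; apply: subset_trans sJK.
Qed.

(* The tameness condition [U_IJ ∩ U_IK = U_I(J∪K)] makes [stepK] confluent. *)
Lemma stepK_confluent a b c : stepK a b -> stepK a c -> exists d, stepK b d /\ stepK c d.
Proof.
  case: a => I x; case: b => J y; case: c => K w /=.
  move=> [HI [HJ [sIJ [HxJ <-]]]] [_ [HK [sIK [HxK <-]]]].
  case: (proj1 (Htame_union HI HJ HK sIJ sIK x) (conj HxJ HxK)) => HL HxL.
  have sJL : J \subset J :|: K by apply: subsetUl.
  have sKL : K \subset J :|: K by apply: subsetUr.
  exists (existT _ (J :|: K) (phi I (J :|: K) x)) => /=.
  have [_ Ey] := phi_comp HI HJ HL sIJ sJL HxJ (UIJ_phi HI HJ HL sIJ sJL HxL).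
  have [_ Ew] := phi_comp HI HK HL sIK sKL HxK (UIJ_phi HI HK HL sIK sKL HxL).
  split; (do 3 split => //); split.
  - exact: UIJ_phi HI HJ HL sIJ sJL HxL.
  - by rewrite Ey.
  - exact: UIJ_phi HI HK HL sIK sKL HxL.
  - by rewrite Ew.
Qed.

Lemma equivK_sym a b : eqK a b -> eqK b a.
Proof. exact: rst_sym. Qed.

Lemma equivK_trans a b c : eqK a b -> eqK b c -> eqK a c.
Proof. exact: rst_trans. Qed.

Lemma stepK_equivK a b : stepK a b -> eqK a b.
Proof. exact: rst_step. Qed.

Definition joinable (a b : point) : Prop := exists c, stepK a c /\ stepK b c.

Lemma joinable_trans a b c : joinable a b -> joinable b c -> joinable a c.
Proof.
  move=> [d1 [Ha Hb1]] [d2 [Hb2 Hc]].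
  case: (stepK_confluent Hb1 Hb2) => d [H1 H2].
  by exists d; split; [apply: stepK_trans H1|apply: stepK_trans H2].
Qed.

Lemma equivK_joinable a b : eqK a b -> a = b \/ joinable a b.
Proof.
  elim=> [{}a {}b Hab|{}a|{}a {}b _ [->|[c [H1 H2]]]|{}a {}b c _ IH1 _ IH2].
  - right; exists b; split=> //; case: b Hab => J y; case: a => I x /= [_ [HJ _]].
    exact: stepK_refl.
  - by left.
  - by left.
  - by right; exists c.
  - case: IH1 => [->|J1] //; case: IH2 => [<-|J2]; [by right|].
    by right; apply: joinable_trans J1 J2.
Qed.

Lemma equivK_stepK I J x y : IK I -> IK J -> I \subset J ->
  eqK (existT _ I x) (existT _ J y) -> stepK (existT _ I x) (existT _ J y).
Proof.
  move=> HI HJ sIJ /equivK_joinable [<-|[[L p] /=]]; first exact: stepK_refl.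
  move=> [[_ [HL [sIL [HxL <-]]]] [_ [_ [sJL [HyL Exy]]]]].
  have HxJ := UIJ_shrink HI HJ HL sIJ sJL HxL.
  have [_ Ex] := phi_comp HI HJ HL sIJ sJL HxJ (UIJ_phi HI HJ HL sIJ sJL HxL).
  do 4 split => //; apply: (phi_inj HJ HL sJL (UIJ_phi HI HJ HL sIJ sJL HxL) HyL).
  by rewrite -Ex Exy.
Qed.

Hypothesis Hred_order : forall I J, IK I -> IK J -> forall x y,
  closure (V I) x -> closure (V J) y -> eqK (existT _ I x) (existT _ J y) ->
  I \subset J \/ J \subset I.
Definition linked (a b : point) : Prop := stepK a b \/ stepK b a.

Lemma reduction_linked I J x y : IK I -> IK J -> closure (V I) x -> closure (V J) y ->
  eqK (existT _ I x) (existT _ J y) -> linked (existT _ I x) (existT _ J y).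
Proof.
  move=> HI HJ Hx Hy Hxy; case: (Hred_order HI HJ Hx Hy Hxy) => sub.
  - by left; apply: equivK_stepK.
  - by right; apply: equivK_stepK => //; apply: equivK_sym.
Qed.

Local Notation ZT := (ZTop X N F U E z V sigma).
Local Notation ZRel := (fun a b : ZT => stepK (proj1_sig a) (proj1_sig b)).
Local Notation qZ := (quot_proj ZRel).

Lemma Z_linked (a b : ZT) : eqK (proj1_sig a) (proj1_sig b) -> linked (proj1_sig a) (proj1_sig b).
Proof.
  case: a b => [[I x] [HI [Vx _]]] [[J y] [HJ [Vy _]]] /=.
  by apply: reduction_linked => //; apply: subset_closure.
Qed.

Lemma qZ_eq (a b : ZT) : qZ a = qZ b <-> linked (proj1_sig a) (proj1_sig b).
Proof.
  rewrite quot_proj_eq; split=> [|[H|H]].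
  - by move/(clos_rst_map (f := @proj1_sig _ _) (RB := stepK) (fun _ _ H => H)); apply: Z_linked.
  - exact: rst_step.
  - by apply: rst_sym; apply: rst_step.
Qed.

(** * Hausdorff separation *)

Hypothesis HEEclosed : forall I J : {set 'I_N}, IK J -> I \subset J -> isClosed (EE I J).
Hypothesis HEEphi : forall I J, IK I -> IK J -> I \proper J ->
  forall x, UIJ I J x -> EE I J (s J (phi I J x)).
Hypothesis HVopen : forall I, IK I -> isOpen (V I).
Hypothesis HVcompact : forall I, IK I -> rel_compact (V I) (fun _ => True).

Lemma metric_exists M : exists d : U M -> U M -> R, IK M -> is_metric d.
Proof.
  case: (classic (IK M)) => [/U_metrizable [d Hd]|HM]; first by exists d.
  by exists (fun _ _ => 0).
Qed.

(* Outside [I_K], [dU M] is an arbitrary placeholder. *)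
Definition dU M : U M -> U M -> R :=
  proj1_sig (constructive_indefinite_description _ (metric_exists M)).
Arguments dU : clear implicits.

Lemma dU_metric M : IK M -> is_metric (dU M).
Proof. by rewrite /dU; case: constructive_indefinite_description. Qed.

(* By tameness the image of [phi_MK] is closed in [s_K^-1(E_MK)], which is closed. *)
Lemma phi_graph_closed M K (y : nat -> U M) p q : IK M -> IK K -> M \subset K ->
  (forall n, UIJ M K (y n)) -> converges y p -> converges (fun n => phi M K (y n)) q ->
  UIJ M K p /\ phi M K p = q.
Proof.
  move=> HM HK sMK Hy Hp Hq.
  case: (eqVneq M K) => [eMK|nMK].
  - subst K; have Ey : (fun n => phi M M (y n)) = y.
    { by apply: functional_extensionality => n; rewrite HphiII. }
    rewrite Ey in Hq; rewrite HphiII; split=> //; exact: converges_unique (U_hausdorff HM) Hp Hq.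
  - have pMK : M \proper K by rewrite properEneq nMK.
    have HEq : EE M K (s K q).
    { apply: (closed_limit (s_continuous HK) (HEEclosed HK sMK) Hq) => n; exact: HEEphi. }
    case: (Htame_image HM HK HK sMK (subxx K) q) => _ /(_ (conj (HUII q) HEq)) [x [Hx Ex]].
    suff <- : x = p by [].
    apply: converges_unique (U_hausdorff HM) _ Hp => W HW Wx.
    case: (phi_open_on HM HK pMK HW) => O [HO HWO].
    have Oq : O q by rewrite -Ex; apply/(HWO _ Hx).
    by case: (Hq O HO Oq) => n0 Hn0; exists n0 => n /Hn0 On; apply/(HWO _ (Hy n)).
Qed.

Definition rep (a : point) M (v : U M) : Prop := IK M /\ eqK a (existT _ M v).
Arguments rep : clear implicits.

Lemma rep_stepK a M K v w : rep a M v -> rep a K w -> M \subset K ->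
  stepK (existT _ M v) (existT _ K w).
Proof.
  move=> [HM Hv] [HK Hw] sMK; apply: equivK_stepK => //.
  exact: equivK_trans (equivK_sym Hv) Hw.
Qed.

Lemma rep_uniq a M v w : rep a M v -> rep a M w -> v = w.
Proof. by move=> Hv Hw; case: (rep_stepK Hv Hw (subxx M)) => /= _ [_ [_ [_]]]; rewrite HphiII. Qed.

Lemma rep_step a M K v w : rep a M v -> stepK (existT _ M v) (existT _ K w) -> rep a K w.
Proof.
  move=> [_ Hv] Hs; split; first by case: Hs => _ [].
  exact: equivK_trans Hv (stepK_equivK Hs).
Qed.

Lemma UIJ_of_approx M K v : IK M -> IK K -> M \subset K ->
  (forall n, exists y, dU M v y < inv_succ n /\ UIJ M K y /\ V K (phi M K y)) -> UIJ M K v.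
Proof.
  move=> HM HK sMK /choice [y Hy].
  have [g [q [Hg [_ Hq]]]] := compact_metric_subseq (u := fun n => phi M K (y n))
    (dU_metric HK) (proj2 (HVcompact HK)) (fun n => conj I (subset_closure (proj2 (proj2 (Hy n))))).
  have Hyv : converges y v by apply: (metric_converges (dU_metric HM)) => n; case: (Hy n).
  have HyK n : UIJ M K (y (g n)) by case: (Hy (g n)) => _ [].
  exact: (phi_graph_closed HM HK sMK HyK (converges_subseq Hg Hyv) Hq).1.
Qed.

Definition lift_radius (a : point) M K (del eps : R) : Prop :=
  forall v y, rep a M v -> dU M v y < del -> UIJ M K y -> V K (phi M K y) ->
    exists w, rep a K w /\ dU K w (phi M K y) < eps.

Lemma lift_radius_mono a M K del del' eps :
  lift_radius a M K del eps -> del' <= del -> lift_radius a M K del' eps.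
Proof. by move=> H Hle v y Hv Hy; apply: H Hv _; lra. Qed.

Lemma lift_radius_refl a M del : lift_radius a M M del del.
Proof. by move=> v y Hv Hy _ _; exists v; rewrite HphiII. Qed.

Lemma lift_radius_exists a M K eps : IK M -> IK K -> M \subset K -> 0 < eps ->
  exists del, 0 < del /\ lift_radius a M K del eps.
Proof.
  move=> HM HK sMK He.
  case: (classic (exists v, rep a M v)) => [[v Hv]|Hno]; last first.
  { by exists 1; split=> [|v y Hv]; [lra|case: Hno; exists v]. }
  case: (classic (UIJ M K v)) => [HvK|HvK].
  - have Hw : rep a K (phi M K v) by apply: rep_step Hv _; do 4 (split => //).
    have [W [HW HWphi]] := phi_continuous_on HM HK sMK (ball_open (dU_metric HK) (phi M K v) eps).
    have Wv : W v by apply/(HWphi v HvK); rewrite (metric_xx (dU_metric HK)).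
    have [del [Hdel Hball]] := open_ball (dU_metric HM) HW Wv.
    exists del; split=> // v' y Hv' Hy HyK _; rewrite -(rep_uniq Hv Hv') in Hy.
    by exists (phi M K v); split=> //; apply/(HWphi y HyK)/Hball.
  - have [n Hn] : exists n, ~ exists y, dU M v y < inv_succ n /\ UIJ M K y /\ V K (phi M K y).
    { by apply: not_all_ex_not => H; apply: HvK; apply: UIJ_of_approx. }
    exists (inv_succ n); split=> [|v' y Hv' Hy HyK VKy]; first exact: inv_succ_gt0.
    by rewrite -(rep_uniq Hv Hv') in Hy; case: Hn; exists y.
Qed.

Lemma lift_radius_uniform a (eps : {set 'I_N} -> R) M : (forall K, 0 < eps K) ->
  exists del, 0 < del /\
    forall K, IK M -> IK K -> M \subset K -> lift_radius a M K del (eps K).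
Proof.
  move=> Hpos.
  have [|K _|del [Hdel H]] := positive_all_In (l := enum {set 'I_N})
    (P := fun K del => IK M -> IK K -> M \subset K -> lift_radius a M K del (eps K)).
  - by move=> K d d' Hd [_ Hle] HM HK sMK; apply: lift_radius_mono (Hd HM HK sMK) Hle.
  - case: (classic (IK M /\ IK K /\ M \subset K)) => [[HM [HK sMK]]|Hn].
    + by have [del [Hdel H]] := lift_radius_exists a HM HK sMK (Hpos K); exists del.
    + by exists 1; split=> [|HM HK sMK]; [lra|case: Hn].
  - by exists del; split=> // K; apply: H; apply: In_mem; rewrite mem_enum.
Qed.

Definition good_radii_above a (eps : {set 'I_N} -> R) (k : nat) : Prop :=
  forall M K : {set 'I_N}, (k <= #|M|)%nat -> IK M -> IK K -> M \subset K ->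
    lift_radius a M K (eps M) (eps K).

Definition good_radii a eps : Prop := good_radii_above a eps 0.

(* Downward induction on [#|M|]: shrink [eps M] until it lifts to every larger [K]. *)
Lemma good_radii_exist a d0 : 0 < d0 -> exists eps, (forall M, 0 < eps M <= d0) /\ good_radii a eps.
Proof.
  move=> Hd0.
  suff H j : exists eps, (forall M, 0 < eps M <= d0) /\ good_radii_above a eps (N.+1 - j).
  { by case: (H N.+1) => eps; rewrite subnn; exists eps. }
  elim: j => [|j [eps [Hb Hg]]].
  - exists (fun _ => d0); split=> [M|M K]; first lra.
    rewrite subn0 => HM; have := max_card (mem M).
    by rewrite card_ord => /(leq_trans HM); rewrite ltnn.
  - have Hpos K : 0 < eps K by case: (Hb K).
    have [del Hdel] := choice (fun M => lift_radius_uniform a M Hpos).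
    pose k := (N.+1 - j.+1)%nat.
    exists (fun M : {set 'I_N} => if #|M| == k then Rmin (eps M) (del M) else eps M); split.
    + move=> M; case: (Hb M) (Hdel M) => H1 H2 [H3 _]; case: ifP => _; split=> //.
      * exact: Rmin_pos.
      * exact: Rle_trans (Rmin_l _ _) H2.
    + move=> M K HkM HM HK sMK.
      case: (eqVneq M K) => [<-|nMK]; first exact: lift_radius_refl.
      have ltMK : (#|M| < #|K|)%nat by apply: proper_card; rewrite properEneq nMK.
      rewrite (gtn_eqF (leq_ltn_trans HkM ltMK)).
      case: ifP => [_|/negbT nMk].
      * exact: lift_radius_mono (proj2 (Hdel M) K HM HK sMK) (Rmin_r _ _).
      * apply: Hg => //; have ltkM : (k < #|M|)%nat by rewrite ltn_neqAle eq_sym nMk HkM.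
        by apply: leq_trans ltkM; rewrite /k subnS; apply: leqSpred.
Qed.

Definition nbhd (a : point) (eps : {set 'I_N} -> R) (t : point) : Prop :=
  exists M (y v : U M), stepK t (existT _ M y) /\ V M y /\ rep a M v /\ dU M v y < eps M.

Lemma nbhd_open a eps L : isOpen (fun x : U L => nbhd a eps (existT _ L x)).
Proof.
  pose P M (v : U M) (x : U L) := (IK L /\ IK M /\ L \subset M /\ rep a M v) /\
    (UIJ L M x /\ (V M (phi L M x) /\ dU M v (phi L M x) < eps M)).
  apply: (open_ext (A := fun x => exists M v, P M v x)).
  - apply: open_exists => M; apply: open_exists => v; apply: open_guard => -[HL [HM [sLM _]]].
    apply: (open_preimage_on (O := fun y => V M y /\ dU M v y < eps M)).
    + exact: UIJ_open HL HM sLM.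
    + exact: phi_continuous_on HL HM sLM.
    + exact: open_inter (HVopen HM) (ball_open (dU_metric HM) v (eps M)).
  - move=> x; split.
    + by move=> [M [v [[HL [HM [sLM Hv]]] [Hx [Vy Hd]]]]]; exists M, (phi L M x), v.
    + by move=> [M [y [v [[HL [HM [sLM [Hx <-]]]] [Vy [Hv Hd]]]]]]; exists M, v.
Qed.

Lemma nbhd_Z_open a eps : @isOpen ZT (fun t => nbhd a eps (proj1_sig t)).
Proof. by exists (nbhd a eps); split=> // L; apply: nbhd_open. Qed.

Lemma nbhd_self (t : ZT) eps : (forall M, 0 < eps M) -> nbhd (proj1_sig t) eps (proj1_sig t).
Proof.
  case: t => [[L x] [HL [Vx _]]] /= Hpos; exists L, x, x.
  split; first exact: stepK_refl.
  split=> //; split; first by split=> //; apply: rst_refl.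
  by rewrite (metric_xx (dU_metric HL)).
Qed.

Lemma nbhd_saturated a eps (t t' : ZT) : good_radii a eps ->
  linked (proj1_sig t) (proj1_sig t') -> nbhd a eps (proj1_sig t) -> nbhd a eps (proj1_sig t').
Proof.
  case: t t' => [[L x] [HL [Vx _]]] [[K w] [HK [Vw _]]] /= Hgood.
  move=> [Hxw|Hwx] [M [y [v [Hxy [Vy [Hv Hd]]]]]]; last first.
  { by exists M, y, v; split=> //; apply: stepK_trans Hwx Hxy. }
  have HM : IK M by case: Hv.
  have Hwy : eqK (existT _ K w) (existT _ M y).
  { exact: equivK_trans (equivK_sym (stepK_equivK Hxw)) (stepK_equivK Hxy). }
  case: (reduction_linked HK HM (subset_closure Vw) (subset_closure Vy) Hwy) => [Hwy'|].
  { by exists M, y, v. }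
  move=> /= [_ [_ [sMK [HyK Ey]]]].
  have VKy : V K (phi M K y) by rewrite Ey.
  have [v' [Hv' Hd']] := Hgood M K (leq0n _) HM HK sMK v y Hv Hd HyK VKy.
  by rewrite Ey in Hd'; exists K, w, v'; split; [apply: stepK_refl|].
Qed.

Lemma equivK_limit M K (y : nat -> U M) (y' : nat -> U K) v v' : IK M -> IK K -> M \subset K ->
  (forall n, eqK (existT _ M (y n)) (existT _ K (y' n))) -> converges y v -> converges y' v' ->
  stepK (existT _ M v) (existT _ K v').
Proof.
  move=> HM HK sMK Hy Hv Hv'.
  have Hstep n := equivK_stepK HM HK sMK (Hy n).
  have Ey : (fun n => phi M K (y n)) = y'.
  { by apply: functional_extensionality => n; case: (Hstep n) => _ [_ [_ []]]. }
  rewrite -Ey in Hv'.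
  have HyK n : UIJ M K (y n) by case: (Hstep n) => _ [_ [_ []]].
  have [HvK <-] := phi_graph_closed HM HK sMK HyK Hv Hv'.
  by do 4 (split; first done).
Qed.

Definition close_pair (a b : point) (n : nat) (MK : {set 'I_N} * {set 'I_N}) : Prop :=
  exists (y v : U MK.1) (y' v' : U MK.2), rep a MK.1 v /\ rep b MK.2 v' /\
    V MK.1 y /\ V MK.2 y' /\ eqK (existT _ MK.1 y) (existT _ MK.2 y') /\
    dU MK.1 v y < inv_succ n /\ dU MK.2 v' y' < inv_succ n.

Lemma close_pair_mono a b m n MK : (m <= n)%nat -> close_pair a b n MK -> close_pair a b m MK.
Proof.
  move=> /inv_succ_le Hmn [y [v [y' [v' [Hv [Hv' [Vy [Vy' [Hyy' [Hd Hd']]]]]]]]]].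
  by exists y, v, y', v'; do 5 (split => //); split; lra.
Qed.

(* The close pairs converge to the reps of [a] and [b], which [phi_graph_closed] then relates. *)
Lemma close_pairs_equiv a b M K : (forall n, close_pair a b n (M, K)) -> eqK a b.
Proof.
  move=> H.
  have [v [v' [Hv Hv']]] : exists v v', rep a M v /\ rep b K v'.
  { by case: (H 0%nat) => /= [y [v [y' [v' [Hv [Hv' _]]]]]]; exists v, v'. }
  have [HM HK] : IK M /\ IK K by case: Hv; case: Hv'.
  have /choice [p Hp] : forall n, exists p : U M * U K, V M p.1 /\ V K p.2 /\
      eqK (existT _ M p.1) (existT _ K p.2) /\ dU M v p.1 < inv_succ n /\ dU K v' p.2 < inv_succ n.
  { move=> n; case: (H n) => /= [y [w [y' [w' [Hw [Hw' Hyy']]]]]].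
    by exists (y, y'); rewrite (rep_uniq Hv Hw) (rep_uniq Hv' Hw'). }
  have Hc : converges (fun n => (p n).1) v.
  { by apply: (metric_converges (dU_metric HM)) => n; case: (Hp n) => [_ [_ [_ []]]]. }
  have Hc' : converges (fun n => (p n).2) v'.
  { by apply: (metric_converges (dU_metric HK)) => n; case: (Hp n) => [_ [_ [_ []]]]. }
  have Hpp n : eqK (existT _ M (p n).1) (existT _ K (p n).2) by case: (Hp n) => [_ [_ []]].
  case: (Hp 0%nat) => V1 [V2 _].
  case: (Hred_order HM HK (subset_closure V1) (subset_closure V2) (Hpp 0%nat)) => sub.
  - have Hvv' := stepK_equivK (equivK_limit HM HK sub Hpp Hc Hc').
    exact: equivK_trans (proj2 Hv) (equivK_trans Hvv' (equivK_sym (proj2 Hv'))).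
  - have Hv'v := stepK_equivK (equivK_limit HK HM sub (fun n => equivK_sym (Hpp n)) Hc' Hc).
    exact: equivK_trans (proj2 Hv) (equivK_trans (equivK_sym Hv'v) (equivK_sym (proj2 Hv'))).
Qed.

Lemma nbhd_separate (a b : ZT) : ~ linked (proj1_sig a) (proj1_sig b) ->
  exists ea eb, good_radii (proj1_sig a) ea /\ good_radii (proj1_sig b) eb /\
    (forall M, 0 < ea M) /\ (forall M, 0 < eb M) /\
    forall t : ZT,
      nbhd (proj1_sig a) ea (proj1_sig t) -> nbhd (proj1_sig b) eb (proj1_sig t) -> False.
Proof.
  move=> Hab.
  have /choice [ep Hep] : forall cn : point * nat,
      exists eps, (forall M, 0 < eps M <= inv_succ cn.2) /\ good_radii cn.1 eps.
  { by move=> [c n]; apply: good_radii_exist; apply: inv_succ_gt0. }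
  pose ea n := ep (proj1_sig a, n); pose eb n := ep (proj1_sig b, n).
  case: (classic (exists n, forall t : ZT,
    nbhd (proj1_sig a) (ea n) (proj1_sig t) -> nbhd (proj1_sig b) (eb n) (proj1_sig t) -> False))
    => [[n Hn]|Hno].
  { case: (Hep (proj1_sig a, n)) (Hep (proj1_sig b, n)) => /= Ha Ga [Hb Gb].
    exists (ea n), (eb n); do 2 (split => //).
    by split; [move=> M; case: (Ha M)|split; [move=> M; case: (Hb M)|]]. }
  exfalso; apply: Hab; apply: Z_linked.
  have [[M K] [g [Hg Hclose]]] : exists MK g, increasing g /\
      forall n, close_pair (proj1_sig a) (proj1_sig b) (g n) MK.
  { apply: finite_pigeonhole => n; apply: NNPP => Hn; apply: Hno; exists n.
    move=> t [M [y [v [Hty [Vy [Hv Hd]]]]]] [K [y' [v' [Hty' [Vy' [Hv' Hd']]]]]].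
    apply: Hn; exists (M, K), y, v, y', v'; do 4 (split => //); split.
    - exact: equivK_trans (equivK_sym (stepK_equivK Hty)) (stepK_equivK Hty').
    - case: (Hep (proj1_sig a, n)) (Hep (proj1_sig b, n)) => /= /(_ M) [_ Ha] _ [/(_ K) [_ Hb] _].
      by split; [apply: Rlt_le_trans Hd Ha|apply: Rlt_le_trans Hd' Hb].
  }
  apply: (close_pairs_equiv (M := M) (K := K)) => n.
  exact: close_pair_mono (increasing_ge Hg n) (Hclose n).
Qed.

Lemma Z_hausdorff : hausdorff (quotTop ZRel).
Proof.
  move=> q1 q2 Hne.
  case: (quot_proj_surj q1) (quot_proj_surj q2) Hne => a <- [b <-] Hne.
  have Hab : ~ linked (proj1_sig a) (proj1_sig b) by move/qZ_eq.
  have [ea [eb [Ga [Gb [Pa [Pb Hdis]]]]]] := nbhd_separate Hab.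
  have Hopen c eps : good_radii c eps ->
      @isOpen (quotTop ZRel) (fun q => exists t : ZT, nbhd c eps (proj1_sig t) /\ qZ t = q).
  { move=> Gc; apply: quot_image_open (nbhd_Z_open c eps) _ => t t' /qZ_eq.
    exact: nbhd_saturated Gc. }
  exists (fun q => exists t : ZT, nbhd (proj1_sig a) ea (proj1_sig t) /\ qZ t = q).
  exists (fun q => exists t : ZT, nbhd (proj1_sig b) eb (proj1_sig t) /\ qZ t = q).
  do 2 (split; first exact: Hopen).
  split; first by exists a; split=> //; apply: nbhd_self.
  split; first by exists b; split=> //; apply: nbhd_self.
  move=> q [t1 [N1 <-]] [t2 [N2 Eq]]; apply: (Hdis t2 _ N2).
  by apply: nbhd_saturated Ga _ N1; apply/qZ_eq; rewrite Eq.
Qed.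

(** * Sequential compactness *)

Hypothesis Hsigma : forall I, IK I ->
  continuous_on (V I) (sigma I) /\ forall x, V I x -> pr I (sigma I x) = x.
Hypothesis Hsigma_compat : forall I J, IK I -> IK J -> I \proper J ->
  forall x, V I x -> UIJ I J x -> V J (phi I J x) -> Phi I J (sigma I x) = sigma J (phi I J x).

Lemma sigma_zero_phi I J x : IK I -> IK J -> I \subset J ->
  V I x -> UIJ I J x -> V J (phi I J x) ->
  sigma I x = z I x <-> sigma J (phi I J x) = z J (phi I J x).
Proof.
  move=> HI HJ sIJ Vx Hx Vy.
  case: (eqVneq I J) => [eIJ|nIJ]; first by subst J; rewrite HphiII.
  have pIJ : I \proper J by rewrite properEneq nIJ.
  rewrite -(Hsigma_compat HI HJ pIJ Vx Hx Vy) (z_phi HI HJ pIJ Hx).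
  split=> [-> //|E0].
  have H1 : UIJ I J (pr I (sigma I x)) by rewrite (proj2 (Hsigma HI)).
  have H2 : UIJ I J (pr I (z I x)) by rewrite pr_z.
  exact: (Phi_inj HI HJ pIJ H1 H2 E0).
Qed.

Lemma Z_linked_zero (a : ZT) J y : IK J -> V J y ->
  linked (proj1_sig a) (existT _ J y) -> sigma J y = z J y.
Proof.
  case: a => [[I x] [HI [Vx Zx]]] /= HJ Vy [[_ [_ [sIJ [Hx Ey]]]]|[_ [_ [sJI [Hy Ey]]]]].
  - by subst y; apply/(sigma_zero_phi HI HJ sIJ Vx Hx Vy).
  - by subst x; apply/(sigma_zero_phi HJ HI sJI Vy Hy Vx).
Qed.

Hypothesis HCV : forall I, IK I -> rel_compact (C I) (V I).
Hypothesis Hsigma_zero : forall I, IK I -> forall x, V I x -> sigma I x = z I x ->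
  exists J c, IK J /\ C J c /\ eqK (existT _ I x) (existT _ J c).

Lemma qZ_rep_in_C (q : quotTop ZRel) : exists J (c : U J),
  C J c /\ inZ X N F U E z V sigma (existT _ J c) /\ forall Hc, qZ (exist _ (existT _ J c) Hc) = q.
Proof.
  case: (quot_proj_surj q) => -[[I x] Hx] <-; have [HI [Vx Zx]] := Hx.
  have [J [c [HJ [Cc Hxc]]]] := Hsigma_zero HI Vx Zx.
  have Vc : V J c := proj1 (HCV HJ) c Cc.
  have Hlink : linked (existT _ I x) (existT _ J c).
  { by apply: reduction_linked Hxc => //; apply: subset_closure. }
  have Zc := Z_linked_zero (a := exist _ _ Hx) HJ Vc Hlink.
  exists J, c; split=> //; split=> [|Hc]; first by do 2 (split => //).
  apply/qZ_eq => /=.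
  by case: Hlink; [right|left].
Qed.

Lemma Z_seq_compact : seq_compact (quotTop ZRel).
Proof.
  move=> u.
  have [J [g1 [Hg1 /choice [c Hc]]]] := finite_pigeonhole (fun n => qZ_rep_in_C (u n)).
  have HZ n : inZ X N F U E z V sigma (existT _ J (c n)) := proj1 (proj2 (Hc n)).
  have HJ : IK J := proj1 (HZ 0%nat).
  have [g2 [p [Hg2 [[Vp _] Hcv]]]] := compact_metric_subseq (u := c) (dU_metric HJ)
    (proj2 (HCV HJ)) (fun n => conj (proj1 (proj2 (HZ n))) (subset_closure (proj1 (Hc n)))).
  have Zp : sigma J p = z J p.
  { exact: coincide_limit (E_hausdorff HJ) (proj1 (Hsigma HJ)) (z_continuous HJ) Hcv Vp
      (fun n => proj2 (HZ (g2 n))). }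
  have HZp : inZ X N F U E z V sigma (existT _ J p) by [].
  exists (fun n => g1 (g2 n)), (qZ (exist _ _ HZp)); split; first exact: increasing_comp.
  have -> : (fun n => u (g1 (g2 n))) = (fun n => qZ (exist _ _ (HZ (g2 n)))).
  { by apply: functional_extensionality => n; rewrite (proj2 (proj2 (Hc (g2 n)))). }
  exact/quot_proj_converges/(converges_sum_sub (P := inZ X N F U E z V sigma)).
Qed.

End Atlas.

Theorem mainTheorem18 (X : Top) (N : nat) (F : 'I_N -> X -> Prop)
  (U E : {set 'I_N} -> Top)
  (pr : forall I, E I -> U I) (z s : forall I, U I -> E I) (psi : forall I, U I -> X)
  (UIJ : forall I J : {set 'I_N}, U I -> Prop) (phi : forall I J, U I -> U J)
  (Phi : forall I J, E I -> E J) (EE : forall I J : {set 'I_N}, E J -> Prop)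
  (V C : forall I, U I -> Prop) (sigma : forall I, U I -> E I) :
  compact (fun _ : X => True) -> metrizable X ->
  is_tame_top_atlas X N F U E pr z s psi UIJ phi Phi EE ->
  is_nested_reduction X N F U E z s UIJ phi C V ->
  is_admissible_section X N F U E pr z UIJ phi Phi V C sigma ->
  hausdorff (ZquotTop X N F U E z UIJ phi V sigma) /\ seq_compact (ZquotTop X N F U E z UIJ phi V sigma).
Proof.
  move=> _ _ [[_ [_ [Hchart [HUII [HphiII [Hcc Hcocycle]]]]]] [Hfilt [Htame_union Htame_image]]].
  case: Hfilt => HEEclosed [_ [_ [_ [_ HEEim]]]].
  move=> [_ [[HV [Hred_order _]] HCV]] [Hsigma [Hsigma_compat Hsigma_zero]].
  have HVopen I : inIK X N F I -> isOpen (V I) by move=> /HV [].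
  have HVcompact I : inIK X N F I -> rel_compact (V I) (fun _ => True) by move=> /HV [_ []].
  have HEEphi I J : inIK X N F I -> inIK X N F J -> I \proper J ->
      forall x, UIJ I J x -> EE I J (s J (phi I J x)).
  { by move=> HI HJ pIJ; case: (HEEim I J HI HJ pIJ). }
  split.
  - exact: (Z_hausdorff Hchart HUII HphiII Hcc Hcocycle Htame_union Htame_image Hred_order
      HEEclosed HEEphi HVopen HVcompact).
  - exact: (Z_seq_compact Hchart HUII HphiII Hcc Hcocycle Htame_union Htame_image Hred_order
      Hsigma Hsigma_compat HCV Hsigma_zero).
Qed.
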